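(* Let $f\in\mathbb{Q}[x]$ be a univariate numerical polynomial of degree $n$. Then \[ \frac{\gcd\{kf(k)\mid k\in\mathbb{Z}\}}{\gcd\{f(k)\mid k\in\mathbb{Z}\}} \] divides $\operatorname{lcm}\{1,\ldots,n+1\}$.
   Context: A numerical polynomial is a polynomial with rational coefficients taking integer values at all integers. *)

From HB Require Import structures.
From mathcomp Require Import all_boot all_order all_algebra.
Set Implicit Arguments. Unset Strict Implicit. Unset Printing Implicit Defensive.
Import Order.TTheory GRing.Theory Num.Theory.
Local Open Scope ring_scope.

Definition numerical (f : {poly rat}) : Prop :=
  forall k : int, f.[k%:~R] \is a Num.int.

Definition is_gcd_set (S : int -> Prop) (g : int) : Prop :=
  0 <= g /\ (forall m, S m -> (g %| m)%Z) /\
  (forall d : int, (forall m, S m -> (d %| m)%Z) -> (d %| g)%Z).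

Definition lcm_upto (N : nat) : nat := \big[lcmn/1%N]_(1 <= i < N.+1) i.

(* Every k f(k) is a multiple of g1, so g1 divides g2.  With L = lcm{1..n+1},
   each L f(t) = (L/t) * t f(t) for t = 1..n+1 is a multiple of g2.  Since L f
   has degree at most n, finite differences express its value at any integer
   as an integer combination of these n+1 values, so g2 divides every L f(k)
   and hence L g1.  Finally f <> 0 forces g1 <> 0, and g2/g1 divides L. *)

From HB Require Import structures.
From mathcomp Require Import all_boot all_order all_algebra.
From mathcomp Require Import ring.
Set Implicit Arguments. Unset Strict Implicit. Unset Printing Implicit Defensive.
Import Order.TTheory GRing.Theory Num.Theory.
Local Open Scope ring_scope.

Section IntSteps.
Variables (V : zmodType) (S : V -> Prop).
Hypotheses (SD : forall x y, S x -> S y -> S (x + y))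
  (SN : forall x, S x -> S (- x)).

Lemma int_steps_closed (u : int -> V) (a : int) :
  S (u a) -> (forall k, S (u (k + 1) - u k)) -> forall k, S (u k).
Proof.
move=> Sa Sstep k; rewrite -(subrK a k).
elim/int_rec: (k - a) => [|m IHm|m IHm]; first by rewrite add0r.
  have -> : m.+1%:Z + a = m%:Z + a + 1 by rewrite intS; ring.
  by rewrite -(subrK (u (m%:Z + a)) (u _)); exact: SD _ _ (Sstep _) IHm.
set x := - m.+1%:Z + a.
have x1E : x + 1 = - m%:Z + a by rewrite /x intS; ring.
have -> : u x = u (x + 1) + - (u (x + 1) - u x) by rewrite opprB addrC subrK.
by rewrite x1E; apply: SD => //; apply: SN; rewrite -x1E.
Qed.

End IntSteps.

Section FiniteDifference.
Variable R : idomainType.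
Implicit Types p : {poly R}.

Definition fdiff p := p \Po ('X + 1%:P) - p.

Lemma horner_fdiff p x : (fdiff p).[x] = p.[x + 1] - p.[x].
Proof. by rewrite hornerD hornerN horner_comp hornerD hornerX hornerC. Qed.

Lemma size_fdiff p : (size (fdiff p) <= (size p).-1)%N.
Proof.
have [-> | p_neq0] := eqVneq p 0.
  by rewrite /fdiff comp_poly0 subr0 size_poly0.
have size_shift : size ('X + 1%:P : {poly R}) = 2 by rewrite size_XaddC.
have size_comp := size_comp_poly2 p size_shift.
apply/leq_sizeP => j; rewrite leq_eqVlt => /predU1P[<- | lt_j]; rewrite coefB.
  rewrite -{1}size_comp -!lead_coefE lead_coef_comp ?size_shift //.
  by rewrite lead_coefXaddC expr1n mulr1 subrr.
have le_j : (size p <= j)%N by rewrite (polySpred p_neq0).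
by rewrite !nth_default ?subr0 ?size_comp.
Qed.

Variable S : R -> Prop.
Hypotheses (S0 : S 0) (SD : forall x y, S x -> S y -> S (x + y))
  (SN : forall x, S x -> S (- x)).

Lemma poly_int_values_closed N p (a : int) :
  (size p <= N)%N -> (forall t : nat, (t < N)%N -> S p.[(a + t%:Z)%:~R]) ->
  forall k : int, S p.[k%:~R].
Proof.
elim: N p a => [|N IHN] p a size_p Sp.
  by move: size_p; rewrite size_poly_leq0 => /eqP-> k; rewrite horner0.
have horner_step (k : int) :
    p.[(k + 1)%:~R] - p.[k%:~R] = (fdiff p).[k%:~R].
  by rewrite horner_fdiff intrD.
apply: (int_steps_closed SD SN (u := fun k => p.[k%:~R]) (a := a)).
  by have := Sp 0%N isT; rewrite addr0.
move=> k; rewrite horner_step; apply: (IHN _ a) => [|t lt_tN].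
  by rewrite (leq_trans (size_fdiff p)) //; case: (size p) size_p.
rewrite -horner_step (_ : a + t%:Z + 1 = a + t.+1%:Z); last first.
  by rewrite intS; ring.
by apply: SD; [apply: Sp | apply/SN/Sp]; rewrite ltnS // ltnW.
Qed.

End FiniteDifference.

Lemma dvdz_divz_gcd_mul (t c m : int) :
  c != 0 -> (t %| c * m)%Z -> ((t %/ gcdz t c)%Z %| m)%Z.
Proof.
move=> c_neq0 t_cm.
have e_neq0 : gcdz t c != 0 by rewrite gcdz_eq0 negb_and c_neq0 orbT.
have t_me : (t %| m * gcdz t c)%Z.
  have [u [v <-]] := Bezoutz t c.
  rewrite mulrDr rpredD //; first by rewrite mulrA dvdz_mull.
  by rewrite mulrCA dvdz_mull // mulrC.
by rewrite -(dvdz_mul2r e_neq0) divzK ?dvdz_gcdl.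
Qed.

Lemma gcd_set_dvdz_mul (S : int -> Prop) (g t c : int) :
  is_gcd_set S g -> (forall m, S m -> (t %| c * m)%Z) -> (t %| c * g)%Z.
Proof.
move=> [_ [_ g_max]] t_cS.
have [-> | c_neq0] := eqVneq c 0; first by rewrite mul0r dvdz0.
have t'_g : ((t %/ gcdz t c)%Z %| g)%Z.
  by apply: g_max => m Sm; apply: dvdz_divz_gcd_mul c_neq0 (t_cS m Sm).
by rewrite -(divzK (dvdz_gcdl t c)) [c * g]mulrC dvdz_mul ?dvdz_gcdr.
Qed.

Lemma natr_roots_poly_eq0 (R : numDomainType) (p : {poly R}) :
  (forall i : nat, root p i%:R) -> p = 0.
Proof.
move=> p_roots.
apply: (@roots_geq_poly_eq0 _ p [seq i%:R | i <- iota 0 (size p)]).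
- by apply/allP => _ /mapP[i _ ->].
- by rewrite map_inj_uniq ?iota_uniq // => i j /eqP; rewrite eqr_nat => /eqP.
- by rewrite size_map size_iota.
Qed.

Lemma dvdn_lcm_upto N i : (0 < i <= N)%N -> (i %| lcm_upto N)%N.
Proof.
move=> i_range; rewrite /lcm_upto (bigD1_seq i) ?mem_index_iota ?iota_uniq //.
exact: dvdn_lcml.
Qed.

Definition int_multiple (R : pzRingType) (g : int) (x : R) : Prop :=
  exists z : int, x = (g * z)%:~R.

Section IntMultiple.
Variables (R : pzRingType) (g : int).

Lemma int_multiple0 : int_multiple g (0 : R).
Proof. by exists 0; rewrite mulr0. Qed.

Lemma int_multipleD (x y : R) :
  int_multiple g x -> int_multiple g y -> int_multiple g (x + y).
Proof. by move=> [z ->] [w ->]; exists (z + w); rewrite mulrDr intrD. Qed.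

Lemma int_multipleN (x : R) : int_multiple g x -> int_multiple g (- x).
Proof. by move=> [z ->]; exists (- z); rewrite mulrN intrN. Qed.

End IntMultiple.

Lemma int_multiple_intr (R : numDomainType) (g m : int) :
  int_multiple g (m%:~R : R) <-> (g %| m)%Z.
Proof.
split=> [[z /intr_inj ->] | /dvdzP[z ->]]; first exact: dvdz_mulr.
by exists z; rewrite mulrC.
Qed.

Lemma int_multiple_lcm_upto_horner (R : idomainType) (f : {poly R}) n g :
  (size f <= n.+1)%N ->
  (forall k : int, int_multiple g (k%:~R * f.[k%:~R])) ->
  forall k : int, int_multiple g ((lcm_upto n.+1)%:R * f.[k%:~R]).
Proof.
move=> size_f g_kf k; set L := lcm_upto n.+1; rewrite -hornerZ; move: k.
apply: (@poly_int_values_closed R (int_multiple g) (int_multiple0 R g)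
  (@int_multipleD R g) (@int_multipleN R g) n.+1 _ 1) => [|t lt_tn].
  exact: leq_trans (size_scale_leq _ f) size_f.
have [z Ez] := g_kf (1 + t%:Z).
have L_split : L%:R = (L %/ t.+1)%:R * t.+1%:R :> R.
  by rewrite -natrM divnK // dvdn_lcm_upto.
exists ((L %/ t.+1)%N%:Z * z).
by rewrite hornerZ L_split -mulrA [t.+1%:R]pmulrn intS Ez pmulrn -intrM mulrCA.
Qed.

Theorem lemma3p8 (f : {poly rat}) (n : nat) (g1 g2 : int) :
  numerical f -> size f = n.+1 ->
  is_gcd_set (fun m : int => exists k : int, f.[k%:~R] = m%:~R) g1 ->
  is_gcd_set (fun m : int => exists k : int, k%:~R * f.[k%:~R] = m%:~R) g2 ->
  exists d : int, g2 = d * g1 /\ (d %| (lcm_upto n.+1)%:Z)%Z.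
Proof.
move=> f_num size_f G1 G2; set L := lcm_upto n.+1.
have f_int k : exists w : int, f.[k%:~R] = w%:~R by apply/intrP; exact: f_num.
have [_ [g1_dvd _]] := G1; have [_ [g2_dvd g2_max]] := G2.
have g1_neq0 : g1 != 0.
  apply/eqP => g1_0; move: size_f; suff -> : f = 0 by rewrite size_poly0.
  apply: natr_roots_poly_eq0 => i; have [w fw] := f_int i%:Z.
  have := g1_dvd w (ex_intro _ _ fw); rewrite g1_0 dvd0z => /eqP w0.
  by rewrite rootE pmulrn fw w0.
have /dvdzP[d g2E] : (g1 %| g2)%Z.
  apply: g2_max => m [k fk]; have [w fw] := f_int k.
  rewrite -(int_multiple_intr rat) -fk fw -intrM int_multiple_intr.
  exact/dvdz_mull/(g1_dvd w)/(ex_intro _ k).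
have Lf_mult : forall k, int_multiple g2 (L%:R * f.[k%:~R]).
  apply: int_multiple_lcm_upto_horner; first by rewrite size_f.
  move=> k; have [w fw] := f_int k; rewrite fw -intrM int_multiple_intr.
  by apply: g2_dvd; exists k; rewrite fw intrM.
have : (g2 %| L%:Z * g1)%Z.
  apply: gcd_set_dvdz_mul G1 _ => m [k fk].
  by rewrite -(int_multiple_intr rat) intrM -fk -pmulrn; apply: Lf_mult.
by move=> g2_Lg1; exists d; split; rewrite // -(dvdz_mul2r g1_neq0) -g2E.
Qed.
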